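(* Let $N\ge2$ and let $U(\omega)$, $\omega\in\mathbb{R}$, be a smooth function with values in the $N\times N$ unitary matrices. Then there exist $K\le N(N-1)/2$ pairs of indices $(m_k,n_k)$, $1\le m_k<n_k\le N$, and matrix-valued functions $T_{m_kn_k}(\omega)$, $k=1,\dots,K$, each of which is, for every $\omega$, an $N\times N$ two-level unitary acting on modes $m_k,n_k$, such that $$U(\omega)=\prod_{k=1}^{K}T_{m_kn_k}(\omega)\qquad\text{for all }\omega\in\mathbb{R}.$$
   Context: An $N\times N$ two-level unitary acting on modes $m<n$ is a unitary matrix that coincides with the identity except in the rows and columns $m,n$, where its $2\times2$ submatrix (rows/columns $m,n$) has the form $\begin{pmatrix}\mathrm{e}^{\mathrm{i}\phi}a & -b\\ \mathrm{e}^{\mathrm{i}\phi}b^* & a^*\end{pmatrix}$ with $a,b\in\mathbb{C}$, $|a|^2+|b|^2=1$, $\phi\in\mathbb{R}$ (all allowed to depend on $\omega$). ${}^*$ is complex conjugation. *)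

From HB Require Import structures.
From mathcomp Require Import all_boot all_order all_algebra.
From mathcomp Require Import all_classical all_reals all_analysis.
From mathcomp Require Import complex.
Set Implicit Arguments. Unset Strict Implicit. Unset Printing Implicit Defensive.
Import Order.TTheory GRing.Theory Num.Theory.
Local Open Scope ring_scope.

Definition smooth_fun (R : realType) (f : R -> R) : Prop :=
  forall (k : nat) (x : R), derivable (derive1n k f) x 1.

Definition adjmx (R : realType) (N : nat) (A : 'M[R[i]]_N) : 'M[R[i]]_N :=
  (map_mx (@conjc R) A)^T.

Definition unitary_mx (R : realType) (N : nat) (A : 'M[R[i]]_N) : Prop :=
  A *m adjmx A = 1%:M.

Definition smooth_mx_fun (R : realType) (N : nat) (U : R -> 'M[R[i]]_N) : Prop :=
  forall i j : 'I_N, smooth_fun (fun w => @complex.Re R (U w i j)) /\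
                     smooth_fun (fun w => @complex.Im R (U w i j)).

Definition expi (R : realType) (phi : R) : R[i] := Complex (cos phi) (sin phi).

Definition two_level_unitary (R : realType) (N : nat) (m n : 'I_N)
    (T : 'M[R[i]]_N) : Prop :=
  unitary_mx T /\
  (forall i j : 'I_N, ~~ ((i \in [:: m; n]) && (j \in [:: m; n])) ->
      T i j = (i == j)%:R) /\
  exists (a b : R[i]) (phi : R),
    `|a| ^+ 2 + `|b| ^+ 2 = 1 /\
    T m m = expi phi * a /\ T m n = - b /\
    T n m = expi phi * conjc b /\ T n n = conjc a.

From HB Require Import structures.
From mathcomp Require Import all_boot all_order all_algebra.
From mathcomp Require Import all_classical all_reals all_analysis.
From mathcomp Require Import complex.
From mathcomp Require Import ring lra.
Import Order.TTheory GRing.Theory Num.Theory.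
Set Implicit Arguments.
Unset Strict Implicit.
Unset Printing Implicit Defensive.
Local Open Scope ring_scope.

(* Reck-Zeilinger elimination, pointwise in [w].  If the columns of a unitary
   [M] outside the modes [k :: ks] are standard basis vectors, its column [k]
   is a unit vector supported on [k :: ks]; Givens rotations on the pairs
   (k, t), t in ks, assemble a product [G] of two-level unitaries with that
   same column, and [G^* M] is standard outside [ks].  When only two modes
   are left, the remaining unitary is itself a two-level unitary, its global
   phase being absorbed by [expi phi].  Running this over all modes uses the
   N(N-1)/2 pairs m < n in a fixed order independent of [w], so the factors
   can be chosen pointwise. *)

Section OrderedPairs.
Variable T : Type.

Fixpoint ordered_pairs (s : seq T) : seq (T * T) :=
  if s is x :: s' then [seq (x, y) | y <- s'] ++ ordered_pairs s' else [::].

Lemma size_ordered_pairs s : size (ordered_pairs s) = 'C(size s, 2).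
Proof. by elim: s => //= x s IH; rewrite size_cat size_map IH binS bin1 addnC. Qed.

Lemma ordered_pairs_rel (r : rel T) s : transitive r -> sorted r s ->
  all (fun p => r p.1 p.2) (ordered_pairs s).
Proof.
move=> r_tr; elim: s => //= x s IH x_s.
rewrite all_cat all_map (order_path_min r_tr x_s) IH //.
exact: path_sorted x_s.
Qed.

End OrderedPairs.

Section Scalars.
Variable R : realType.
Local Notation C := R[i].

Lemma expi_of_unit (e : C) : e * conjc e = 1 -> exists phi : R, expi phi = e.
Proof.
case: e => x y /= [] h _.
have x2y2 : x ^+ 2 + y ^+ 2 = 1 by rewrite -h; ring.
have x_itv : -1 <= x <= 1 by apply/andP; split; nra.
have cos_x : cos (acos x) = x by rewrite acosK // in_itv.
have sin_x : sin (acos x) = `|y|.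
  by rewrite sin_acos // -sqrtr_sqr; congr Num.sqrt; lra.
have [y_ge0|y_lt0] := lerP 0 y.
  by exists (acos x); rewrite /expi cos_x sin_x ger0_norm.
by exists (- acos x); rewrite /expi cosN sinN cos_x sin_x ltr0_norm // opprK.
Qed.

Lemma unitary2_form (al be ga de : C) :
  al * conjc al + be * conjc be = 1 -> ga * conjc al + de * conjc be = 0 ->
  ga * conjc ga + de * conjc de = 1 ->
  exists (a b : C) (phi : R), [/\ `|a| ^+ 2 + `|b| ^+ 2 = 1,
    al = expi phi * a, be = - b, ga = expi phi * conjc b & de = conjc a].
Proof.
move=> row_m orth row_n; set e := al * de - be * ga.
(* Orthonormality of the rows forces the second row to be the determinant
   [e] times the cofactors of the first. *)
have de_e : de = e * conjc al.
  apply/esym/eqP; rewrite -subr_eq0; apply/eqP.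
  transitivity (de * (al * conjc al + be * conjc be - 1) - be * (ga * conjc al + de * conjc be)).
    by rewrite /e; ring.
  by rewrite row_m orth subrr !mulr0 subr0.
have ga_e : ga = - (e * conjc be).
  apply/esym/eqP; rewrite -subr_eq0; apply/eqP.
  transitivity (ga * (al * conjc al + be * conjc be - 1) - al * (ga * conjc al + de * conjc be)).
    by rewrite /e; ring.
  by rewrite row_m orth subrr !mulr0 subr0.
have e_unit : e * conjc e = 1.
  rewrite -row_n ga_e de_e !rmorphN !rmorphM /= !conjcK -[e * _]mulr1 -row_m.
  ring.
have [phi phi_e] := expi_of_unit e_unit.
exists (al * conjc e), (- be), phi; rewrite phi_e !sqr_normc !rmorphN !rmorphM /= conjcK.
split.
- rewrite -row_m.
  transitivity (al * conjc al * (e * conjc e) + be * conjc be); first by ring.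
  by rewrite e_unit mulr1.
- by rewrite mulrCA e_unit mulr1.
- by rewrite opprK.
- by rewrite ga_e; ring.
- by rewrite de_e mulrC.
Qed.

Lemma givens_coeffs (a b : C) : exists c s r : C,
  [/\ conjc r = r, r * r = a * conjc a + b * conjc b, c * r = a, s * r = b
    & c * conjc c + s * conjc s = 1].
Proof.
set n2 := a * conjc a + b * conjc b.
have n2_ge0 : 0 <= n2 by rewrite addr_ge0 ?mulcJ_ge0.
have r_real : conjc (sqrtC n2) = sqrtC n2 by apply: geC0_conj; rewrite sqrtC_ge0.
have r2 : sqrtC n2 * sqrtC n2 = n2 by rewrite -expr2 sqrtCK.
have [r0|r_neq0] := eqVneq (sqrtC n2) 0.
  move/eqP: r0; rewrite sqrtC_eq0 paddr_eq0 ?mulcJ_ge0 // !mulf_eq0 !conjc_eq0 !orbb.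
  case/andP => /eqP a0 /eqP b0; exists 1, 0, 0; rewrite /n2 a0 b0.
  by split; rewrite ?conjc0 ?mulr0 ?mul0r ?addr0 ?conjc1 ?mulr1.
exists (a / sqrtC n2), (b / sqrtC n2), (sqrtC n2); split; rewrite ?divfK //.
rewrite !rmorphM /= conjc_inv r_real.
transitivity (n2 / (sqrtC n2 * sqrtC n2)); first by rewrite /n2; field.
by rewrite r2 divff // -r2 mulf_neq0.
Qed.

End Scalars.

Section Matrices.
Variables (R : realType) (N : nat).
Local Notation C := R[i].
Local Notation "''M'" := 'M[C]_N (at level 0).

Definition identity_off (ks : seq 'I_N) (A : 'M) : Prop :=
  forall i j, ~~ ((i \in ks) && (j \in ks)) -> A i j = (i == j)%:R.

Lemma adjmxE (A : 'M) i j : adjmx A i j = conjc (A j i).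
Proof. by rewrite !mxE. Qed.

Lemma adjmxK (A : 'M) : adjmx (adjmx A) = A.
Proof. by apply/matrixP => i j; rewrite !adjmxE conjcK. Qed.

Lemma unitary_mxM (A B : 'M) : unitary_mx A -> unitary_mx B -> unitary_mx (A *m B).
Proof.
rewrite /unitary_mx /adjmx => uA uB.
by rewrite map_mxM trmx_mul mulmxA -(mulmxA A) uB mulmx1 uA.
Qed.

Lemma unitary_mx1 : unitary_mx (1%:M : 'M).
Proof. by rewrite /unitary_mx /adjmx map_scalar_mx tr_scalar_mx rmorph1 mul1mx. Qed.

Lemma unitary_mx_adjmx (A : 'M) : unitary_mx A -> adjmx A *m A = 1%:M.
Proof. exact: mulmx1C. Qed.

Lemma unitary_adjmx (A : 'M) : unitary_mx A -> unitary_mx (adjmx A).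
Proof. by move=> uA; rewrite /unitary_mx adjmxK unitary_mx_adjmx. Qed.

Lemma unitary_mx_row (A : 'M) i k : unitary_mx A ->
  \sum_l A i l * conjc (A k l) = (i == k)%:R.
Proof.
move=> /matrixP/(_ i k); rewrite !mxE => <-.
by apply: eq_bigr => l _; rewrite adjmxE.
Qed.

Lemma unitary_mx_col (A : 'M) i k : unitary_mx A ->
  \sum_l conjc (A l i) * A l k = (i == k)%:R.
Proof.
move=> /unitary_mx_adjmx/matrixP/(_ i k); rewrite !mxE => <-.
by apply: eq_bigr => l _; rewrite adjmxE.
Qed.

Lemma sumr_supp1 (f : 'I_N -> C) k :
  (forall l, l != k -> f l = 0) -> \sum_l f l = f k.
Proof. by move=> f0; rewrite (bigD1 k) //= big1 ?addr0. Qed.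

Lemma sumr_supp2 (f : 'I_N -> C) m n : m != n ->
  (forall l, l != m -> l != n -> f l = 0) -> \sum_l f l = f m + f n.
Proof.
move=> mn f0; rewrite (bigD1 m) //= (bigD1 n) 1?eq_sym //= big1 ?addr0 //.
by move=> l /andP[]; exact: f0.
Qed.

Lemma unitary_row_of_col (A : 'M) k : unitary_mx A ->
  (forall i, A i k = (i == k)%:R) -> forall j, A k j = (k == j)%:R.
Proof.
move=> uA colk j; have := unitary_mx_col j k uA.
rewrite (sumr_supp1 (k := k)) => [|l lk]; last by rewrite colk (negbTE lk) mulr0.
by rewrite colk eqxx mulr1 => jk; rewrite -[A k j]conjcK jk conjc_nat eq_sym.
Qed.

Lemma unitary_identity_off (ks : seq 'I_N) (A : 'M) : unitary_mx A ->
  (forall i j, j \notin ks -> A i j = (i == j)%:R) -> identity_off ks A.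
Proof.
move=> uA cols i j; rewrite negb_and => /orP[i_ks|]; last exact: cols.
by rewrite (unitary_row_of_col uA (fun l => cols l i i_ks)).
Qed.

Definition givens (m n : 'I_N) (c s : C) : 'M :=
  \matrix_(i, k)
    if i == m then (if k == m then c else if k == n then - conjc s else 0)
    else if i == n then (if k == m then s else if k == n then conjc c else 0)
    else (i == k)%:R.

Section TwoModes.
Variables m n : 'I_N.
Hypothesis mn : m != n.

Let nm : (n == m) = false. Proof. by rewrite eq_sym (negbTE mn). Qed.

Lemma two_level_unitary_block (T : 'M) :
  unitary_mx T -> identity_off [:: m; n] T -> two_level_unitary m n T.
Proof.
move=> uT offT; split=> //; split=> //.
have row_off i l : i \in [:: m; n] -> l != m -> l != n -> T i l = 0.
  move=> i_mn lm ln; rewrite offT; last by rewrite !inE (negbTE lm) (negbTE ln) andbF.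
  have [il|//] := eqVneq i l.
  by move: i_mn; rewrite il !inE (negbTE lm) (negbTE ln).
have rowE i k : i \in [:: m; n] ->
    \sum_l T i l * conjc (T k l) = T i m * conjc (T k m) + T i n * conjc (T k n).
  by move=> i_mn; apply: sumr_supp2 => // l lm ln; rewrite row_off ?mul0r.
have := unitary_mx_row m m uT; rewrite rowE ?inE ?eqxx // => row_m.
have := unitary_mx_row n m uT; rewrite rowE ?inE ?eqxx ?nm // => orth.
have := unitary_mx_row n n uT; rewrite rowE ?inE ?eqxx ?orbT // => row_n.
by have [a [b [phi [? ? ? ? ?]]]] := unitary2_form row_m orth row_n; exists a, b, phi.
Qed.

Lemma givens_mulmx (c s : C) (A : 'M) i k : (givens m n c s *m A) i k =
  if i == m then c * A m k - conjc s * A n k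
  else if i == n then s * A m k + conjc c * A n k else A i k.
Proof.
rewrite mxE; have [->|im] := eqVneq i m.
  rewrite (sumr_supp2 mn) => [|l lm ln]; rewrite !mxE ?eqxx ?nm ?mulNr //.
  by rewrite (negbTE lm) (negbTE ln) mul0r.
have [->|i_n] := eqVneq i n.
  rewrite (sumr_supp2 mn) => [|l lm ln]; rewrite !mxE ?eqxx ?nm //.
  by rewrite (negbTE lm) (negbTE ln) mul0r.
rewrite (sumr_supp1 (k := i)) => [|l li]; rewrite !mxE (negbTE im) (negbTE i_n).
  by rewrite eqxx mul1r.
by rewrite eq_sym (negbTE li) mul0r.
Qed.

Lemma givens_identity_off (c s : C) : identity_off [:: m; n] (givens m n c s).
Proof.
move=> i j; rewrite !inE mxE negb_and !negb_or.
have [->|im] := eqVneq i m; [|have [->|i_n] := eqVneq i n] => //=.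
- by case/andP=> jm jn; rewrite (negbTE jm) (negbTE jn) eq_sym (negbTE jm).
- by move=> /andP[jm jn]; rewrite (negbTE jm) (negbTE jn) eq_sym (negbTE jn).
Qed.

Lemma givens_unitary (c s : C) :
  c * conjc c + s * conjc s = 1 -> unitary_mx (givens m n c s).
Proof.
move=> cs1; apply/matrixP => i k; rewrite givens_mulmx !adjmxE !mxE !eqxx nm.
case: (eqVneq i m) => [->|im]; [|case: (eqVneq i n) => [->|i_n]];
case: (eqVneq k m) => [km|km]; try subst k; try (case: (eqVneq k n) => [kn|kn]; try subst k);
rewrite ?eqxx ?nm ?rmorphN ?conjc0 ?conjc_nat ?mulr0 ?subr0 ?addr0 //= ?conjcK.
- by rewrite -cs1; ring.
- by ring.
- by ring.
- by rewrite -cs1; ring.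
- by rewrite (negbTE im).
- by rewrite (negbTE i_n).
- by rewrite eq_sym.
Qed.

Lemma givens_two_level (c s : C) :
  c * conjc c + s * conjc s = 1 -> two_level_unitary m n (givens m n c s).
Proof.
by move=> cs1; apply: two_level_unitary_block; [exact: givens_unitary | exact: givens_identity_off].
Qed.

End TwoModes.

Inductive two_level_prod : seq ('I_N * 'I_N) -> 'M -> Prop :=
| two_level_prod_nil : two_level_prod [::] 1%:M
| two_level_prod_cons p T L M : two_level_unitary p.1 p.2 T ->
    two_level_prod L M -> two_level_prod (p :: L) (T *m M).

Lemma two_level_prod_cat L1 L2 A B : two_level_prod L1 A -> two_level_prod L2 B ->
  two_level_prod (L1 ++ L2) (A *m B).
Proof.
move=> prodA prodB; elim: prodA => [|p T L M uT _ IH] /=; first by rewrite mul1mx.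
by rewrite -mulmxA; constructor.
Qed.

Lemma two_level_prod_unitary L M : two_level_prod L M -> unitary_mx M.
Proof. by elim=> [|p T L' M' [uT _] _ uM]; [exact: unitary_mx1 | exact: unitary_mxM]. Qed.

Lemma two_level_prod_row_id L M k : two_level_prod L M ->
  all (fun p => k \notin [:: p.1; p.2]) L -> forall j, M k j = (k == j)%:R.
Proof.
elim=> [|p T L' M' [_ [offT _]] _ IH] /=; first by move=> _ j; rewrite mxE.
case/andP=> k_p /IH rowM j; rewrite mxE (sumr_supp1 (k := k)) => [|l lk].
  by rewrite rowM offT ?eqxx ?mul1r // (negbTE k_p).
by rewrite offT ?(negbTE k_p) // eq_sym (negbTE lk) mul0r.
Qed.

Lemma two_level_prod_unit_col (j t : 'I_N) (ts : seq 'I_N) (v : 'I_N -> C) :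
  j \notin t :: ts -> (forall i, i \notin j :: t :: ts -> v i = 0) ->
  \sum_i v i * conjc (v i) = 1 ->
  exists2 G, two_level_prod [seq (j, x) | x <- t :: ts] G & forall i, G i j = v i.
Proof.
elim: ts t v => [|t' ts IH] t v; rewrite in_cons negb_or => /andP[jt j_ts] v_supp v_norm.
  exists (givens j t (v j) (v t) *m 1%:M).
    constructor; last by constructor.
    apply: givens_two_level => //; rewrite -v_norm (sumr_supp2 jt) // => l lj lt.
    by rewrite v_supp ?mul0r // !inE (negbTE lj) (negbTE lt).
  move=> i; rewrite mulmx1 mxE eqxx; have [->//|ij] := eqVneq i j.
  have [->//|it] := eqVneq i t.
  by rewrite v_supp // !inE (negbTE ij) (negbTE it).
have tj : (t == j) = false by rewrite eq_sym (negbTE jt).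
have [c [s [r [r_real rr cr sr cs1]]]] := givens_coeffs (v j) (v t).
(* [w] is [v] with the rotation in the plane (j, t) undone. *)
pose w i := if i == j then r else if i == t then 0 else v i.
have [G' prodG' colG'] : exists2 G', two_level_prod [seq (j, x) | x <- t' :: ts] G' &
    forall i, G' i j = w i.
  apply: IH => // [i|].
    rewrite !inE negb_or => /andP[ij i_ts]; rewrite /w (negbTE ij).
    by case: ifP => // it; rewrite v_supp // !inE (negbTE ij) it.
  rewrite -v_norm; apply/eqP; rewrite -subr_eq0 -sumrB (sumr_supp2 jt) => [|l lj lt].
    by rewrite /w eqxx tj eqxx r_real rr mul0r; apply/eqP; ring.
  by rewrite /w (negbTE lj) (negbTE lt) subrr.
exists (givens j t c s *m G'); first by constructor; [exact: givens_two_level | exact: prodG'].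
move=> i; rewrite givens_mulmx // !colG' /w eqxx tj eqxx !mulr0 subr0 addr0.
have [->|ij] := eqVneq i j; first exact: cr.
by have [->|it] := eqVneq i t; first exact: sr.
Qed.

Lemma unitary_two_level_prod (ks : seq 'I_N) (M : 'M) : uniq ks -> (1 < size ks)%N ->
  unitary_mx M -> (forall i j, j \notin ks -> M i j = (i == j)%:R) ->
  two_level_prod (ordered_pairs ks) M.
Proof.
elim: ks M => [|k ks IH] M //= /andP[k_ks uks].
case: ks IH k_ks uks => [|t ts] //= IH k_ks uks _ uM cols.
have offM := unitary_identity_off uM cols.
have [ts0|ts_ne] := eqVneq ts [::].
  subst ts; rewrite /= -[M]mulmx1; constructor; last by constructor.
  by apply: two_level_unitary_block => //; move: k_ks; rewrite inE.
have [G prodG colG] : exists2 G, two_level_prod [seq (k, x) | x <- t :: ts] G &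
    forall i, G i k = M i k.
  apply: two_level_prod_unit_col => // [i i_ks|].
    by rewrite offM ?(negbTE i_ks) //; case: eqP i_ks => // ->; rewrite inE eqxx.
  have := unitary_mx_col k k uM; rewrite eqxx mulr1n => <-.
  by apply: eq_bigr => i _; rewrite mulrC.
have uG := two_level_prod_unitary prodG.
have -> : M = G *m (adjmx G *m M) by rewrite mulmxA uG mul1mx.
apply: (two_level_prod_cat prodG) (IH _ _ _ _ _) => //; first by rewrite ltnS lt0n size_eq0.
  exact/unitary_mxM/uM/unitary_adjmx.
move=> i l l_ks; rewrite mxE.
have [->|lk] := eqVneq l k.
  by rewrite -(unitary_mx_col i k uG); apply: eq_bigr => x _; rewrite adjmxE colG.
have l_kks : l \notin [:: k, t & ts] by rewrite inE negb_or lk.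
rewrite (sumr_supp1 (k := l)) => [|x xl]; last by rewrite cols // (negbTE xl) mulr0.
have rowG := two_level_prod_row_id prodG.
rewrite cols // eqxx mulr1 adjmxE rowG ?conjc_nat 1?eq_sym //.
by apply/allP => _ /mapP[x x_ts ->]; rewrite !inE negb_or lk; apply: contraNN l_ks => /eqP->.
Qed.

Lemma two_level_prod_big L M : two_level_prod L M ->
  exists T : 'I_(size L) -> 'M,
    (forall k, two_level_unitary (tnth (in_tuple L) k).1 (tnth (in_tuple L) k).2 (T k))
    /\ M = \prod_(k < size L) T k.
Proof.
elim=> [|p T L' M' uT _ [F [uF ->]]] /=.
  by exists (fun=> 1%:M); split=> [[]//|]; rewrite big_ord0.
exists (fun k => if unlift ord0 k is Some k' then F k' else T); split.
  move=> k; case: unliftP => [k' ->|->]; rewrite (tnth_nth p) //= add0n.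
  by have := uF k'; rewrite (tnth_nth p).
rewrite (big_ord_recl (size L')) unlift_none.
by under [in RHS]eq_bigr do rewrite liftK.
Qed.

End Matrices.

Theorem proposition1 (R : realType) (N : nat) (hN : (2 <= N)%N)
    (U : R -> 'M[R[i]]_N)
    (hU : forall w, unitary_mx (U w)) (hsmooth : smooth_mx_fun U) :
  exists (K : nat) (mn : 'I_K -> 'I_N * 'I_N) (T : 'I_K -> R -> 'M[R[i]]_N),
    (K <= (N * (N - 1)) %/ 2)%N /\
    (forall k : 'I_K, ((mn k).1 < (mn k).2)%N) /\
    (forall (k : 'I_K) (w : R), two_level_unitary (mn k).1 (mn k).2 (T k w)) /\
    (forall w : R, U w = \prod_(k < K) T k w).
Proof.
set L := ordered_pairs (enum 'I_N).
have prodU w : two_level_prod L (U w).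
  apply: unitary_two_level_prod; rewrite ?enum_uniq ?size_enum_ord // => i j.
  by rewrite mem_enum.
have [T uT] := choice (fun w => two_level_prod_big (prodU w)).
exists (size L), (tnth (in_tuple L)), (fun k w => T w k); split; [|split; [|split]].
- by rewrite size_ordered_pairs size_enum_ord bin2 subn1 divn2.
- move=> k; have : all (fun p => relpre val ltn p.1 p.2) L.
    apply: (@ordered_pairs_rel _ (relpre val ltn)) => [j i l|]; first exact: ltn_trans.
    by rewrite -sorted_map val_enum_ord iota_ltn_sorted.
  by move/allP; apply; exact: mem_tnth.
- by move=> k w; exact: (uT w).1.
- by move=> w; exact: (uT w).2.
Qed.
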